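(* Consider a deterministic two-player discounted game on $\vec{\mathcal G}=([n],E)$, $m=|E|$. Fix $r\in\mathbb R^m$ and $\gamma\in(0,1)$, and let $\tilde r\in\mathbb R^m$, $\varepsilon>0$ satisfy $\|r-\tilde r\|_\infty\le\varepsilon$. Put $\delta=\frac{2\varepsilon}{(1-\gamma)\gamma^n}$. Let $(\sigma,\tau)$ be any pair of policies and $E^{\sigma,\tau}$ the set of edges they use. Define $r^{(1)},r^{(2)}\in\mathbb R^m$ by $r^{(1)}_{ij}=r^{(2)}_{ij}=\tilde r_{ij}$ if $(i,j)\in E^{\sigma,\tau}$, and $r^{(1)}_{ij}=\tilde r_{ij}-\delta$, $r^{(2)}_{ij}=\tilde r_{ij}+\delta$ otherwise. If $(\sigma,\tau)$ is a pair of optimal policies in the discounted games with discount factor $\gamma$ and weights $r^{(1)}$ and $r^{(2)}$, then $(\sigma,\tau)$ is a pair of optimal policies in the discounted game with discount factor $\gamma$ and weights $r$.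
   Context: The graph has no multiple edges, each vertex has an outgoing edge, $[n]=V_{\max}\uplus V_{\min}$, weights $r\in\mathbb R^E$. Policies $\sigma:V_{\max}\to[n]$, $\tau:V_{\min}\to[n]$ with $(i,\sigma(i)),(i,\tau(i))\in E$; $E^{\sigma,\tau}=\{(i,\sigma(i))\}\cup\{(i,\tau(i))\}$. Discounted game with factor $\gamma$: along the play $i_0,i_1,\dots$ Max receives $(1-\gamma)\sum_{t\ge0}\gamma^t r_{i_ti_{t+1}}$ (Max maximizes, Min minimizes). Its value $\lambda^{(\gamma)}\in\mathbb R^n$ is the unique solution of $\lambda^{(\gamma)}_i=\max_{(i,j)\in E}\{(1-\gamma)r_{ij}+\gamma\lambda^{(\gamma)}_j\}$ for $i\in V_{\max}$ and $\lambda^{(\gamma)}_i=\min_{(i,j)\in E}\{(1-\gamma)r_{ij}+\gamma\lambda^{(\gamma)}_j\}$ for $i\in V_{\min}$; a pair $(\sigma,\tau)$ is optimal iff $\sigma(i)$ attains the maximum for every $i\in V_{\max}$ and $\tau(i)$ attains the minimum for every $i\in V_{\min}$ (equivalently, each policy guarantees the value from every initial state against any policy of the opponent). *)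

From mathcomp Require Import all_boot all_order all_algebra.
From mathcomp Require Import reals.
Set Implicit Arguments. Unset Strict Implicit. Unset Printing Implicit Defensive.
Import Order.TTheory GRing.Theory Num.Theory.
Local Open Scope ring_scope.

(* A deterministic two-player game on the graph ([n], E): vertices 'I_n,
   edge relation E : rel 'I_n (a relation, so no multiple edges),
   isMax i <=> i \in V_max (V_min is the complement).
   Weights r are given as a function 'I_n -> 'I_n -> R; only the values on
   edges (i,j) with E i j matter (this is r \in R^E). *)

Section Game.
Variable R : realType.
Variable n : nat.
Variable E : rel 'I_n.
Variable isMax : pred 'I_n.

Definition max_policy (sigma : 'I_n -> 'I_n) : Prop :=
  forall i, isMax i -> E i (sigma i).
Definition min_policy (tau : 'I_n -> 'I_n) : Prop :=
  forall i, ~~ isMax i -> E i (tau i).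

Definition in_Est (sigma tau : 'I_n -> 'I_n) (i j : 'I_n) : bool :=
  (isMax i && (j == sigma i)) || (~~ isMax i && (j == tau i)).

(* lambda solves the Shapley equation of the discounted game:
   lambda_i = max_{(i,j) in E} ((1-g) r_ij + g lambda_j) for i in V_max,
   lambda_i = min_{(i,j) in E} ((1-g) r_ij + g lambda_j) for i in V_min
   (max/min over the finite nonempty set of out-edges, written out). *)
Definition is_disc_value (g : R) (r : 'I_n -> 'I_n -> R) (lam : 'I_n -> R) : Prop :=
  forall i,
    (exists2 j, E i j & lam i = (1 - g) * r i j + g * lam j) /\
    (forall j, E i j ->
       if isMax i then (1 - g) * r i j + g * lam j <= lam i
       else lam i <= (1 - g) * r i j + g * lam j).

(* The value (solution of the Shapley equation) is unique for
   0 < g < 1, so "exists lam" is the same as "for the value lam". *)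
Definition optimal_pair (g : R) (r : 'I_n -> 'I_n -> R)
    (sigma tau : 'I_n -> 'I_n) : Prop :=
  max_policy sigma /\ min_policy tau /\
  exists lam, is_disc_value g r lam /\
    (forall i, isMax i -> lam i = (1 - g) * r i (sigma i) + g * lam (sigma i)) /\
    (forall i, ~~ isMax i -> lam i = (1 - g) * r i (tau i) + g * lam (tau i)).

End Game.

From mathcomp Require Import all_boot all_order all_algebra.
From mathcomp Require Import reals ring lra.
Set Implicit Arguments. Unset Strict Implicit. Unset Printing Implicit Defensive.
Import Order.TTheory GRing.Theory Num.Theory.
Local Open Scope ring_scope.

(* Along the edges E^{sigma,tau} the weights r, r1 and r2 differ by at most
   eps, and the values of a fixed pair of policies are (1-g)-Lipschitz
   averages of the weights, so the value lam of (sigma,tau) for r is within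
   eps of its values lam1, lam2 for r1, r2. Optimality for r2 (resp. r1)
   says that a Max (resp. Min) deviation loses at least (1-g) delta >= 2 eps
   against lam2 (resp. lam1); this margin absorbs the two errors of size eps,
   so no deviation is profitable against lam either. *)

Section PolicyValue.
Variables (R : realFieldType) (T : finType) (g : R) (f : T -> T).
Hypotheses (g_ge0 : 0 <= g) (g_lt1 : g < 1).

Definition policy_value (w l : T -> R) : Prop :=
  forall i, l i = (1 - g) * w i + g * l (f i).

Lemma discounted_fixpoint_norm_le (a d : T -> R) (e : R) :
  (forall i, d i = a i + g * d (f i)) -> (forall i, `|a i| <= (1 - g) * e) ->
  forall i, `|d i| <= e.
Proof.
move=> Hd Ha i.
have [k _ k_max] := @real_arg_maxP R _ i predT (fun j => `|d j|) isT
  (fun j _ => normr_real (d j)).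
suff : `|d k| <= e by apply: le_trans (k_max i isT).
have : `|d k| <= (1 - g) * e + g * `|d k|.
  rewrite {1}Hd; apply: le_trans (ler_normD _ _) _; apply: lerD; first exact: Ha.
  by rewrite normrM (ger0_norm g_ge0) ler_wpM2l //; exact: k_max.
by rewrite -lerBlDr -{1}[`|d k|]mul1r -mulrBl ler_pM2l // subr_gt0.
Qed.

Lemma policy_value_dist (w w' l l' : T -> R) (e : R) :
  policy_value w l -> policy_value w' l' ->
  (forall i, `|w i - w' i| <= e) -> forall i, `|l i - l' i| <= e.
Proof.
move=> Hl Hl' Hw.
apply: (discounted_fixpoint_norm_le (a := fun i => (1 - g) * (w i - w' i))).
  by move=> i; rewrite Hl Hl'; ring.
have g1_ge0 : 0 <= 1 - g by rewrite subr_ge0 ltW.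
by move=> i; rewrite normrM ger0_norm // ler_wpM2l.
Qed.

End PolicyValue.

(* On row vectors, l is the solution of l (1 - g P) = (1 - g) w with P the
   0/1 matrix of f; 1 - g P is invertible because its kernel is trivial by
   [discounted_fixpoint_norm_le] with e = 0. *)
Lemma policy_value_exists (R : realFieldType) (n : nat) (g : R) (f : 'I_n -> 'I_n)
    (w : 'I_n -> R) :
  0 <= g -> g < 1 -> exists l, policy_value g f w l.
Proof.
move=> g_ge0 g_lt1.
pose A : 'M[R]_n := 1%:M - g *: \matrix_(i, j) (i == f j)%:R.
have mulA (u : 'rV_n) j : (u *m A) 0 j = u 0 j - g * u 0 (f j).
  rewrite mulmxBr mulmx1 -scalemxAr !mxE (bigD1 (f j)) //= mxE eqxx mulr1.
  by rewrite big1 ?addr0 // => k /negPf kfj; rewrite mxE kfj mulr0.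
have A_unit : A \in unitmx.
  rewrite -row_free_unit -kermx_eq0; apply/eqP/matrixP => k j.
  have ker_row i : (row k (kermx A) *m A) 0 i = 0.
    by rewrite -row_mul mulmx_ker !mxE.
  have row_le0 i : `|row k (kermx A) 0 i| <= 0.
    apply: (discounted_fixpoint_norm_le (f := f) g_ge0 g_lt1 (a := fun _ => 0)).
      by move=> {}i; apply/eqP; rewrite add0r -subr_eq0 -mulA ker_row.
    by move=> _; rewrite normr0 mulr0.
  by have := row_le0 j; rewrite normr_le0 !mxE => /eqP.
pose l := (\row_i ((1 - g) * w i)) *m invmx A.
exists (fun i => l 0 i) => i.
have := congr1 (fun u : 'rV_n => u 0 i) (mulmxKV A_unit (\row_i ((1 - g) * w i))).
by rewrite /= mulA mxE => <-; rewrite subrK.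
Qed.

Section DeviationMargin.
Variables (R : realFieldType) (g eps delta : R).
Hypotheses (g_ge0 : 0 <= g) (g_le1 : g <= 1) (margin : 2 * eps <= (1 - g) * delta).

Lemma deviation_le (a a' u u' v v' : R) :
  `|a - a'| <= eps -> `|u - u'| <= eps -> `|v - v'| <= eps ->
  (1 - g) * (a' + delta) + g * u' <= v' -> (1 - g) * a + g * u <= v.
Proof.
move=> /ler_normlP[_ aa'] /ler_normlP[_ uu'] /ler_normlP[vv' _] dev.
have g1_ge0 : 0 <= 1 - g by rewrite subr_ge0 g_le1.
have ra : (1 - g) * a <= (1 - g) * (a' + eps) by rewrite ler_wpM2l // -lerBlDl.
have ru : g * u <= g * (u' + eps) by rewrite ler_wpM2l // -lerBlDl.
move: margin; lra.
Qed.

Lemma deviation_ge (a a' u u' v v' : R) :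
  `|a - a'| <= eps -> `|u - u'| <= eps -> `|v - v'| <= eps ->
  v' <= (1 - g) * (a' - delta) + g * u' -> v <= (1 - g) * a + g * u.
Proof.
move=> aa' uu' vv' dev.
have := @deviation_le (- a) (- a') (- u) (- u') (- v) (- v').
by rewrite -!opprD !normrN => /(_ aa' uu' vv'); lra.
Qed.

End DeviationMargin.

Section PolicyPair.
Variables (R : realType) (n : nat) (E : rel 'I_n) (isMax : pred 'I_n).
Variables (sigma tau : 'I_n -> 'I_n).

Definition pair_succ (i : 'I_n) : 'I_n := if isMax i then sigma i else tau i.

Lemma in_EstE i j : in_Est isMax sigma tau i j = (j == pair_succ i).
Proof. by rewrite /in_Est /pair_succ; case: (isMax i); rewrite /= ?orbF. Qed.

Lemma edge_pair_succ i :
  max_policy E isMax sigma -> min_policy E isMax tau -> E i (pair_succ i).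
Proof.
move=> Hsig Htau; rewrite /pair_succ.
by case: ifP => Hi; [apply: Hsig | apply: Htau; rewrite Hi].
Qed.

Variable g : R.

Lemma optimal_pair_policy_value (r : 'I_n -> 'I_n -> R) :
  optimal_pair E isMax g r sigma tau ->
  exists2 lam, is_disc_value E isMax g r lam &
    policy_value g pair_succ (fun i => r i (pair_succ i)) lam.
Proof.
move=> [_ [_ [lam [val [lam_sigma lam_tau]]]]]; exists lam => // i.
by rewrite /pair_succ; case: ifP => Hi; [apply: lam_sigma | apply: lam_tau; rewrite Hi].
Qed.

Lemma optimal_pair_of_policy_value (r : 'I_n -> 'I_n -> R) (lam : 'I_n -> R) :
  max_policy E isMax sigma -> min_policy E isMax tau ->
  policy_value g pair_succ (fun i => r i (pair_succ i)) lam ->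
  (forall i j, E i j -> j != pair_succ i ->
     if isMax i then (1 - g) * r i j + g * lam j <= lam i
     else lam i <= (1 - g) * r i j + g * lam j) ->
  optimal_pair E isMax g r sigma tau.
Proof.
move=> Hsig Htau lam_val no_dev; do 2!split=> //; exists lam; split; last first.
  by split=> i Hi; rewrite lam_val /pair_succ ?Hi ?(negbTE Hi).
move=> i; split; first by exists (pair_succ i); [apply: edge_pair_succ | apply: lam_val].
move=> j Eij; have [->|/(no_dev i j Eij)//] := eqVneq j (pair_succ i).
by rewrite -lam_val; case: (isMax i).
Qed.

End PolicyPair.

(* The factor g ^+ n of the paper's delta only makes the margin larger. *)
Lemma deviation_margin (R : realFieldType) (n : nat) (g eps : R) :
  0 < g -> g < 1 -> 0 <= eps ->
  2 * eps <= (1 - g) * (2 * eps / ((1 - g) * g ^+ n)).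
Proof.
move=> g_gt0 g_lt1 eps_ge0.
have g1_gt0 : 0 < 1 - g by rewrite subr_gt0.
have gn_gt0 : 0 < g ^+ n by rewrite exprn_gt0.
have -> : (1 - g) * (2 * eps / ((1 - g) * g ^+ n)) = 2 * eps / g ^+ n.
  by field; rewrite !gt_eqF.
by rewrite ler_pdivlMr // ler_piMr ?mulr_ge0 // exprn_ile1 // ltW.
Qed.

Theorem mainTheorem19 (R : realType) (n : nat) (E : rel 'I_n) (isMax : pred 'I_n)
  (Hout : forall i : 'I_n, exists j, E i j)
  (r rt : 'I_n -> 'I_n -> R) (g eps : R)
  (Hg0 : 0 < g) (Hg1 : g < 1) (Heps : 0 < eps)
  (Hclose : forall i j, E i j -> `|r i j - rt i j| <= eps)
  (sigma tau : 'I_n -> 'I_n)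
  (Hsig : max_policy E isMax sigma) (Htau : min_policy E isMax tau) :
  let delta := 2 * eps / ((1 - g) * g ^+ n) in
  let r1 := fun i j => if in_Est isMax sigma tau i j then rt i j else rt i j - delta in
  let r2 := fun i j => if in_Est isMax sigma tau i j then rt i j else rt i j + delta in
  optimal_pair E isMax g r1 sigma tau ->
  optimal_pair E isMax g r2 sigma tau ->
  optimal_pair E isMax g r sigma tau.
Proof.
move=> delta r1 r2 /optimal_pair_policy_value[lam1 val1 pol1].
move=> /optimal_pair_policy_value[lam2 val2 pol2].
set s := pair_succ isMax sigma tau in pol1 pol2 *.
have g_ge0 := ltW Hg0; have g_le1 := ltW Hg1.
have [lam pol] := policy_value_exists s (fun i => r i (s i)) g_ge0 Hg1.
have close_s i : `|r i (s i) - rt i (s i)| <= eps.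
  exact/Hclose/edge_pair_succ.
have dist1 : forall i, `|lam i - lam1 i| <= eps.
  by apply: (policy_value_dist g_ge0 Hg1 pol pol1) => i; rewrite /r1 in_EstE eqxx.
have dist2 : forall i, `|lam i - lam2 i| <= eps.
  by apply: (policy_value_dist g_ge0 Hg1 pol pol2) => i; rewrite /r2 in_EstE eqxx.
have margin := deviation_margin n Hg0 Hg1 (ltW Heps).
apply: (optimal_pair_of_policy_value Hsig Htau pol) => i j Eij /negPf j_off.
have close_ij := Hclose i j Eij.
case Hi: (isMax i).
- have := (val2 i).2 j Eij; rewrite Hi /r2 in_EstE j_off.
  exact: (deviation_le g_ge0 g_le1 margin close_ij (dist2 j) (dist2 i)).
- have := (val1 i).2 j Eij; rewrite Hi /r1 in_EstE j_off.
  exact: (deviation_ge g_ge0 g_le1 margin close_ij (dist1 j) (dist1 i)).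
Qed.
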